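(* Let $(u_k)_{k\in\mathbb N}$ be a sequence generated by the proximal-gradient algorithm (with parameter $\eta>0$ and starting point $u_0\in U_{ad}\cap\mathrm{BV}(0,T)$), and assume that $\nabla F$ is Lipschitz continuous from $L^2(0,T)$ to $L^2(0,T)$ with modulus $L$. Then: (1) $(u_k)$ and $(\nabla F(u_k))$ are bounded in $L^2(0,T)$; (2) the sequence $(F(u_k)+G(u_k))_k$ is nonincreasing and convergent; (3) $\|u_{k+1}-u_k\|_{L^2(0,T)}\to0$; (4) $(u_k)$ converges weakly-$\star$ in $\mathrm{BV}(0,T)$ (in particular strongly in $L^1(0,T)$) to some $\bar u\in U_{ad}$.
   Context: $T>0$, $\beta>0$; $\nu_1<\dots<\nu_d$ are integers. $\mathrm{TV}(u):=\sup\{\int_0^T u\varphi'\,dt : \varphi\in C_c^1(0,T),\ \|\varphi\|_\infty\le 1\}$, $\mathrm{BV}(0,T)=\{u\in L^1(0,T):\mathrm{TV}(u)<\infty\}$ with norm $\|u\|_{L^1}+\mathrm{TV}(u)$; weak-$\star$ convergence in $\mathrm{BV}(0,T)$ refers to $\mathrm{BV}(0,T)$ as a dual of a separable Banach space (equivalently: $L^1$-convergence plus boundedness in $\mathrm{BV}$). $U_{ad}:=\{u\in L^1(0,T): u(t)\in\{\nu_1,\dots,\nu_d\}\text{ a.e.}\}$. $F:L^1(0,T)\to\mathbb R$ is bounded from below and Gâteaux differentiable on $L^2(0,T)$ with gradient $\nabla F(u)\in L^2(0,T)$. $G:L^2(0,T)\to\mathbb R\cup\{\infty\}$, $G(u):=\beta\mathrm{TV}(u)+\delta_{U_{ad}}(u)$,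 where $\delta_{U_{ad}}(u)=0$ if $u\in U_{ad}$ and $\infty$ otherwise. Proximal-gradient algorithm: given $u_0$ and $\eta>0$, for $k=0,1,2,\dots$ choose $\tau_k>0$ and a solution $u_{k+1}$ of $\min_{u\in L^2(0,T)} F(u_k)+(\nabla F(u_k),u-u_k)_{L^2}+\frac{\tau_k}2\|u-u_k\|_{L^2}^2+G(u)$ such that $\eta\|u_{k+1}-u_k\|_{L^2}^2\le F(u_k)+\beta\mathrm{TV}(u_k)-(F(u_{k+1})+\beta\mathrm{TV}(u_{k+1}))$; a sequence is generated by the algorithm if such choices are made at every step. *)

From HB Require Import structures.
From mathcomp Require Import all_boot all_order all_algebra.
From mathcomp Require Import all_classical all_reals all_analysis.
Set Implicit Arguments. Unset Strict Implicit. Unset Printing Implicit Defensive.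
Import Order.TTheory GRing.Theory Num.Theory.
Import numFieldNormedType.Exports.
Local Open Scope classical_set_scope.
Local Open Scope ring_scope.

(* Functions on (0,T) are represented by functions R -> R; only their
   restriction to the open interval D T = ]0,T[ matters, up to a.e. equality. *)

Section Defs.
Variable R : realType.
Local Notation leb := (@lebesgue_measure R).

Definition Dom (T : R) : set R := `]0, T[.

Definition inL1 (T : R) (u : R -> R) : Prop :=
  leb.-integrable (Dom T) (EFin \o u).

Definition inL2 (T : R) (u : R -> R) : Prop :=
  measurable_fun (Dom T) u /\
  (\int[leb]_(x in Dom T) ((u x) ^+ 2)%:E < +oo)%E.

Definition L2inner (T : R) (u v : R -> R) : R :=
  fine (\int[leb]_(x in Dom T) (u x * v x)%:E).

Definition L2norm (T : R) (u : R -> R) : R :=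
  Num.sqrt (fine (\int[leb]_(x in Dom T) ((u x) ^+ 2)%:E)).

Definition L1norm (T : R) (u : R -> R) : \bar R :=
  \int[leb]_(x in Dom T) (`|u x|)%:E.

Definition Cc1 (T : R) (phi : R -> R) : Prop :=
  (forall x, derivable phi x 1) /\ continuous (derive1 phi) /\
  exists a b : R, [/\ 0 < a, a < b, b < T &
    forall x, x < a \/ b < x -> phi x = 0].

Definition TV (T : R) (u : R -> R) : \bar R :=
  ereal_sup [set (\int[leb]_(x in Dom T) (u x * derive1 phi x)%:E)%E
            | phi in [set phi | Cc1 T phi /\ forall x, `|phi x| <= 1]].

Definition inBV (T : R) (u : R -> R) : Prop :=
  inL1 T u /\ (TV T u < +oo)%E.

Definition Uad (T : R) (d : nat) (nu : 'I_d -> int) (u : R -> R) : Prop :=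
  inL1 T u /\ {ae leb, forall x, Dom T x -> exists i : 'I_d, u x = (nu i)%:~R}.

Definition Gfun (T beta : R) (d : nat) (nu : 'I_d -> int) (u : R -> R) : \bar R :=
  if `[< Uad T nu u >] then (beta%:E * TV T u)%E else +oo%E.

Definition ae_eq (T : R) (u v : R -> R) : Prop :=
  {ae leb, forall x, Dom T x -> u x = v x}.

Definition F_assumptions (T : R) (F : (R -> R) -> R)
    (gradF : (R -> R) -> (R -> R)) : Prop :=
  [/\ (forall u v, inL1 T u -> inL1 T v -> ae_eq T u v -> F u = F v),
      (exists m : R, forall u, inL1 T u -> m <= F u),
      (forall u, inL2 T u -> inL2 T (gradF u)) &
      (forall u h, inL2 T u -> inL2 T h ->
         (fun s : R => (F (fun x => u x + s * h x) - F u) / s) @ 0^'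
           --> L2inner T (gradF u) h)].

Definition prox_obj (T beta : R) (d : nat) (nu : 'I_d -> int)
    (F : (R -> R) -> R) (gradF : (R -> R) -> (R -> R))
    (uk : R -> R) (tau : R) (v : R -> R) : \bar R :=
  ((F uk + L2inner T (gradF uk) (fun x => v x - uk x)
     + tau / 2 * (L2norm T (fun x => v x - uk x)) ^+ 2)%:E
   + Gfun T beta nu v)%E.

Definition prox_grad_seq (T beta : R) (d : nat) (nu : 'I_d -> int)
    (F : (R -> R) -> R) (gradF : (R -> R) -> (R -> R)) (eta : R)
    (u : nat -> R -> R) : Prop :=
  exists tau : nat -> R, forall k : nat,
    [/\ 0 < tau k,
        inL2 T (u k.+1),
        (forall v, inL2 T v ->
           (prox_obj T beta nu F gradF (u k) (tau k) (u k.+1)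
            <= prox_obj T beta nu F gradF (u k) (tau k) v)%E) &
        ((eta * (L2norm T (fun x => u k.+1 x - u k x)) ^+ 2)%:E
           + ((F (u k.+1))%:E + beta%:E * TV T (u k.+1))
         <= (F (u k))%:E + beta%:E * TV T (u k))%E].

End Defs.

From HB Require Import structures.
From mathcomp Require Import all_boot all_order all_algebra.
From mathcomp Require Import all_classical all_reals all_analysis.
From mathcomp Require Import lra zify measurable_realfun.
Import Order.TTheory GRing.Theory Num.Theory.
Import numFieldNormedType.Exports.
Set Implicit Arguments. Unset Strict Implicit. Unset Printing Implicit Defensive.
Local Open Scope classical_set_scope.
Local Open Scope ring_scope.

(* Since the admissible controls take values in the finite set of integers
   nu_i, two of them differ by at least 1 wherever they differ, so the measure
   of the set where u_(k+1) <> u_k is bounded by ||u_(k+1) - u_k||^2.  The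
   descent inequality makes these squared steps summable, hence by
   Borel-Cantelli almost every point sees only finitely many switches: the
   iterates are eventually constant a.e., and their pointwise limit is an
   admissible control to which they converge in L^1 by dominated bounds.  The
   TV bound coming from the monotone energy passes to the limit by lower
   semicontinuity of TV under L^1 convergence. *)


Section functions_on_Dom.
Context {R : realType} (T : R).
Local Notation mu := (@lebesgue_measure R).
Local Notation D := (Dom T).

Lemma ae_mono (P Q : R -> Prop) : {ae mu, forall x, P x} ->
  (forall x, P x -> Q x) -> {ae mu, forall x, Q x}.
Proof.
by move=> PA PQ; apply: filterS; [exact (ae_filter_ringOfSetsType mu)|exact: PQ|exact: PA].
Qed.

Lemma ae_mono2 (P1 P2 Q : R -> Prop) :
  {ae mu, forall x, P1 x} -> {ae mu, forall x, P2 x} ->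
  (forall x, P1 x -> P2 x -> Q x) -> {ae mu, forall x, Q x}.
Proof.
move=> PA1 PA2 PQ.
by apply: filterS2; [exact (ae_filter_ringOfSetsType mu)|exact: PQ|exact: PA1|exact: PA2].
Qed.

(* Typed in the measurable structure of [lebesgue_measure], so that it unifies
   with the integrability lemmas. *)
Lemma measurable_Dom : measurable (D : set (measurableTypeR R)).
Proof. exact: measurable_itv. Qed.

Lemma lebesgue_Dom : 0 < T -> mu D = T%:E.
Proof. by move=> T0; rewrite lebesgue_measure_itv/= lte_fin T0/= -EFinD subr0. Qed.

Lemma measurable_neq (f g : R -> R) : measurable_fun D f -> measurable_fun D g ->
  measurable (D `&` [set x | f x != g x] : set (measurableTypeR R)).
Proof.
move=> mf mg.
have := measurable_funB mf mg measurable_Dom (measurableC (measurable_set1 0)).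
congr measurable; apply/seteqP; split => x [Dx /=].
  by move=> neq0; split => //=; apply/eqP => e; apply: neq0; rewrite /= e subrr.
by move=> /eqP ne; split => // e; apply: ne; apply/eqP; rewrite -subr_eq0 e.
Qed.

Lemma integrable_ae_bounded (f : R -> R) (M : R) : 0 < T -> 0 <= M ->
  measurable_fun D f -> {ae mu, forall x, D x -> `|f x| <= M} ->
  mu.-integrable D (EFin \o f).
Proof.
move=> T0 M0 mf fM; apply/integrableP; split; first exact/measurable_EFinP.
apply: (@le_lt_trans _ _ (M%:E * mu D)%E); last by rewrite lebesgue_Dom// -EFinM ltry.
apply: integral_le_bound; [exact: measurable_Dom| |by rewrite lee_fin|].
- exact/measurable_EFinP.
- by apply: (ae_mono fM) => x fxM Dx /=; rewrite lee_fin fxM.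
Qed.

Lemma L2norm_ge0 (f : R -> R) : 0 <= L2norm T f.
Proof. exact: sqrtr_ge0. Qed.

Lemma L2norm_sqr (f : R -> R) : inL2 T f ->
  ((L2norm T f ^+ 2)%:E = \int[mu]_(x in D) ((f x) ^+ 2)%:E)%E.
Proof.
case=> _ fin; have i0 : (0 <= \int[mu]_(x in D) ((f x) ^+ 2)%:E)%E.
  by apply: integral_ge0 => x _; rewrite lee_fin sqr_ge0.
by rewrite /L2norm sqr_sqrtr ?fine_ge0// fineK// ge0_fin_numE.
Qed.

Lemma measurable_sqr_EFin (f : R -> R) : measurable_fun D f ->
  measurable_fun D (fun x => ((f x) ^+ 2)%:E).
Proof. by move=> mf; apply/measurable_EFinP; apply: measurable_funX. Qed.

Lemma inL2_ae_bounded (f : R -> R) (M : R) : 0 < T -> 0 <= M ->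
  measurable_fun D f -> {ae mu, forall x, D x -> `|f x| <= M} ->
  inL2 T f /\ L2norm T f <= M * Num.sqrt T.
Proof.
move=> T0 M0 mf fM.
have le : (\int[mu]_(x in D) ((f x) ^+ 2)%:E <= (M ^+ 2 * T)%:E)%E.
  rewrite EFinM -lebesgue_Dom// -integral_cst; last exact: measurable_Dom.
  apply: ae_ge0_le_integral => //; first exact: measurable_Dom.
  - by move=> x _; rewrite lee_fin sqr_ge0.
  - exact: measurable_sqr_EFin.
  - by move=> x _; rewrite lee_fin sqr_ge0.
  - apply: (ae_mono fM) => x fxM Dx; rewrite /cst lee_fin -real_normK ?num_real//.
    by rewrite ler_sqr ?nnegrE ?fxM.
have i0 : (0 <= \int[mu]_(x in D) ((f x) ^+ 2)%:E)%E.
  by apply: integral_ge0 => x _; rewrite lee_fin sqr_ge0.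
split; first by split => //; apply: le_lt_trans le _; rewrite ltey.
rewrite -(ger0_norm M0) -sqrtr_sqr -sqrtrM ?sqr_ge0// /L2norm ler_wsqrtr//.
by rewrite -lee_fin fineK// ge0_fin_numE// (le_lt_trans le)// ltey.
Qed.

Lemma inL2_add_sqr (a b : R -> R) : inL2 T a -> inL2 T b ->
  inL2 T (fun x => a x + b x) /\
  L2norm T (fun x => a x + b x) ^+ 2 <= 2 * L2norm T a ^+ 2 + 2 * L2norm T b ^+ 2.
Proof.
move=> La Lb; have [ma _] := La; have [mb _] := Lb.
have m2a := measurable_sqr_EFin ma; have m2b := measurable_sqr_EFin mb.
have sqr_EFin_ge0 (f : R -> R) x : (0 <= ((f x) ^+ 2)%:E)%E by rewrite lee_fin sqr_ge0.
have le : (\int[mu]_(x in D) ((a x + b x) ^+ 2)%:E <=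
    (2 * L2norm T a ^+ 2 + 2 * L2norm T b ^+ 2)%:E)%E.
  apply: (@le_trans _ _ (\int[mu]_(x in D)
      (2%:E * ((a x) ^+ 2)%:E + 2%:E * ((b x) ^+ 2)%:E))%E).
    apply: ge0_le_integral => //; first exact: measurable_Dom.
    - by apply: measurable_sqr_EFin; exact: measurable_funD.
    - by apply: emeasurable_funD; apply: emeasurable_funM.
    - move=> x _; rewrite -!EFinM -EFinD lee_fin.
      by have := sqr_ge0 (a x - b x); nra.
  rewrite ge0_integralD//; first last.
  - by apply: emeasurable_funM.
  - by move=> x _; rewrite mule_ge0.
  - by apply: emeasurable_funM.
  - by move=> x _; rewrite mule_ge0.
  - exact: measurable_Dom.
  rewrite !ge0_integralZl_EFin//; try exact: measurable_Dom.
  by rewrite -(L2norm_sqr La) -(L2norm_sqr Lb) -!EFinM -EFinD.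
have Lab : inL2 T (fun x => a x + b x).
  by split; [exact: measurable_funD|apply: le_lt_trans le _; rewrite ltey].
by split => //; rewrite -lee_fin (L2norm_sqr Lab).
Qed.

Lemma inL2_opp (b : R -> R) : inL2 T b ->
  inL2 T (fun x => - b x) /\ L2norm T (fun x => - b x) = L2norm T b.
Proof.
move=> [mb fb]; split; last by rewrite /L2norm; under eq_integral do rewrite sqrrN.
split; first exact: measurableT_comp.
by under eq_integral do rewrite sqrrN.
Qed.

End functions_on_Dom.

Section total_variation.
Context {R : realType} (T : R).
Hypothesis T0 : 0 < T.
Local Notation mu := (@lebesgue_measure R).
Local Notation D := (Dom T).
Local Notation mD := (measurable_Dom T).

Lemma Cc1_cst0 : Cc1 T (cst 0).
Proof.
split; first by move=> x; exact: derivable_cst.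
split; last by exists (T / 3), (T / 2); split => //; move: T0; lra.
have -> : derive1 (cst (0 : R)) = cst 0 by apply/funext => x; rewrite derive1_cst.
exact: cst_continuous.
Qed.

Lemma TV_ge0 (v : R -> R) : (0 <= TV T v)%E.
Proof.
apply: ereal_sup_ubound; exists (cst 0).
  by split; [exact: Cc1_cst0|move=> x; rewrite normr0].
have -> : derive1 (cst (0 : R)) = cst 0 by apply/funext => x; rewrite derive1_cst.
by under eq_integral do rewrite mulr0; rewrite integral0.
Qed.

Lemma Cc1_derive_bounded (phi : R -> R) : Cc1 T phi ->
  exists2 K, 0 <= K & forall x, D x -> `|derive1 phi x| <= K.
Proof.
move=> [_ [cg _]]; set g := derive1 phi.
have [c _ gc] : exists2 c, c \in `[0, T] & forall t, t \in `[0, T] -> `|g t| <= `|g c|.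
  apply: (EVT_max (f := fun x => `|g x|)); first exact: ltW.
  apply: continuous_subspaceT => x.
  by apply: continuous_comp; [exact: cg|exact: norm_continuous].
exists `|g c| => // x; rewrite /Dom /= in_itv/= => /andP[x0 xT].
by apply: gc; rewrite in_itv/= !ltW.
Qed.

Lemma TV_le_of_L1_cvg (v : nat -> R -> R) (w : R -> R) (M : R) :
  (forall k, inL1 T (v k)) -> inL1 T w ->
  L1norm T (fun x => v k x - w x) @[k --> \oo] --> 0%E ->
  (forall k, (TV T (v k) <= M%:E)%E) -> (TV T w <= M%:E)%E.
Proof.
move=> iv iw vw TVv; apply: ge_ereal_sup => _ [phi [Cphi phi1] <-].
have [K K0 gK] := Cc1_derive_bounded Cphi.
set g := derive1 phi in gK *.
have mg : measurable_fun D g.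
  apply: (measurable_funS measurableT) => //.
  by apply: continuous_measurable_fun; case: Cphi => _ [].
have bg : [bounded g x | x in D].
  exists K; split; first exact: num_real.
  by move=> r Kr x Dx; apply: le_trans (gK x Dx) _; exact: ltW.
have mulg_int f : inL1 T f -> mu.-integrable D (EFin \o (fun x => f x * g x)).
  move=> fi; have := integrableMl mD fi mg bg; apply: (eq_integrable mD).
  by move=> x _; rewrite /= EFinM.
have step k : (\int[mu]_(x in D) (w x * g x)%:E <=
    M%:E + K%:E * L1norm T (fun x => v k x - w x)%R)%E.
  have dvw : mu.-integrable D (EFin \o (fun x => `|v k x - w x|)).
    have : mu.-integrable D (EFin \o (fun x => v k x - w x)).
      have := integrableB mD (iv k) iw; apply: (eq_integrable mD).
      by move=> x _; rewrite /= EFinB.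
    exact: integrable_norm.
  apply: (@le_trans _ _ (\int[mu]_(x in D)
      ((v k x * g x)%:E + K%:E * (`|v k x - w x|)%:E))%E).
    apply: le_integral; [exact: mD|exact: mulg_int| |].
    - by apply: (integrableD mD); [exact: mulg_int|exact: (integrableZl mD)].
    - move=> x /set_mem Dx; rewrite -EFinM -EFinD lee_fin.
      have : w x * g x - v k x * g x <= K * `|v k x - w x|.
        rewrite -mulrBl; apply: le_trans (ler_norm _) _.
        by rewrite normrM distrC mulrC ler_wpM2r ?gK.
      lra.
  rewrite integralD//; first last.
  - by apply: integrableZl => //; exact: mD.
  - exact: mulg_int.
  - exact: mD.
  rewrite integralZl//; last exact: mD.
  apply: leeD => //; apply: le_trans (TVv k).
  by apply: ereal_sup_ubound; exists phi.
have cv : (M%:E + K%:E * L1norm T (fun x => v k x - w x)%R)%E @[k --> \oo] --> M%:E.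
  rewrite -[X in _ --> X]adde0; apply: cvgeD => //; first exact: cvg_cst.
  by rewrite -(mule0 K%:E); exact: cvgeZl.
rewrite -(cvg_lim _ cv)//; apply: lime_ge; first exact: (cvgP _ cv).
exact: nearW.
Qed.

End total_variation.

Section eventually_constant.
Context {R : realType} (T C : R) (v : nat -> R -> R).
Local Notation mu := (@lebesgue_measure R).
Local Notation D := (Dom T).
Local Notation mD := (measurable_Dom T).

Definition jump_set k : set R := D `&` [set x | v k.+1 x != v k x].

Definition jump_tail k : set R := \bigcup_(j in [set j | (k <= j)%N]) jump_set j.

(* The eventual value of [v n x] when this sequence is eventually constant; junk otherwise. *)
Definition pw_lim (x : R) : R := fine (limn_esup (fun n => (v n x)%:E)).

Hypothesis T0 : 0 < T.
Hypothesis mv : forall k, measurable_fun D (v k).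
Hypothesis vC : forall k, {ae mu, forall x, D x -> `|v k x| <= C}.
Hypothesis jumps_summable : (\sum_(k <oo) mu (jump_set k) < +oo)%E.

Lemma measurable_jump_set k : measurable (jump_set k : set (measurableTypeR R)).
Proof. exact: measurable_neq. Qed.

Lemma measurable_jump_tail k : measurable (jump_tail k : set (measurableTypeR R)).
Proof. by apply: bigcup_measurable => j _; exact: measurable_jump_set. Qed.

Lemma jump_tail_cvg0 : mu (jump_tail k) @[k --> \oo] --> 0%E.
Proof.
rewrite -(lim_sup_set_cvg0 measurable_jump_set jumps_summable).
apply: (lim_sup_set_cvg mu jump_set measurable_jump_set).
apply: (@le_lt_trans _ _ (mu D)); last by rewrite lebesgue_Dom// ltry.
apply: le_measure; rewrite ?inE; [exact: measurable_jump_tail|exact: mD|].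
by move=> x [j _ []].
Qed.

Lemma ae_eventually_off_jumps : {ae mu, forall x, exists k, ~ jump_tail k x}.
Proof.
exists (lim_sup_set jump_set); split.
- apply: bigcap_measurable => // k _.
  by apply: bigcup_measurable => j _; exact: measurable_jump_set.
- exact: lim_sup_set_cvg0 measurable_jump_set jumps_summable.
- by move=> x /= nx n _; apply: contrapT => nJ; apply: nx; exists n.
Qed.

Lemma constant_off_jump_tail x k : D x -> ~ jump_tail k x ->
  forall j, (k <= j)%N -> v j x = v k x.
Proof.
move=> Dx nJ j kj; rewrite -(subnKC kj).
elim: (j - k)%N => [|n IH]; first by rewrite addn0.
rewrite addnS -IH; apply/eqP; apply: contraT => ne; exfalso; apply: nJ.
by exists (k + n)%N; [rewrite /= leq_addr|split].
Qed.

Lemma pw_lim_off_jump_tail x k : D x -> ~ jump_tail k x -> pw_lim x = v k x.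
Proof.
move=> Dx nJ; have cv : (fun n => (v n x)%:E) @ \oo --> (v k x)%:E.
  apply: cvg_near_cst; exists k => // j /= kj.
  by rewrite (constant_off_jump_tail Dx nJ kj).
by rewrite /pw_lim is_cvg_limn_esupE ?(cvg_lim _ cv)//; apply/cvg_ex; exists (v k x)%:E.
Qed.

Lemma measurable_pw_lim : measurable_fun D pw_lim.
Proof.
apply: measurableT_comp => //; apply: measurable_fun_limn_esup => n.
exact/measurable_EFinP.
Qed.

Lemma ae_pw_lim_eq : {ae mu, forall x, D x -> exists k, pw_lim x = v k x}.
Proof.
apply: (ae_mono ae_eventually_off_jumps) => x [k nJ] Dx.
by exists k; exact: pw_lim_off_jump_tail.
Qed.

Lemma ae_pw_lim_bound : {ae mu, forall x, D x -> `|pw_lim x| <= C}.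
Proof.
apply: (ae_mono2 ae_pw_lim_eq (ae_foralln vC)) => x eqx vxC Dx.
by have [k ->] := eqx Dx; exact: vxC.
Qed.

Lemma L1norm_pw_lim_le k : 0 <= C ->
  (L1norm T (fun x => v k x - pw_lim x)%R <= (C + C)%:E * mu (jump_tail k))%E.
Proof.
move=> C0; have CC : 0 <= C + C by rewrite addr_ge0.
have mJ := measurable_jump_tail k.
apply: (@le_trans _ _ (\int[mu]_(x in D) ((C + C)%:E * (\1_(jump_tail k) x)%:E))%E).
  apply: ae_ge0_le_integral => //.
  - exact: mD.
  - apply/measurable_EFinP; apply: measurableT_comp => //.
    exact: measurable_funB (mv k) measurable_pw_lim.
  - by move=> x _; rewrite mule_ge0// lee_fin.
  - by apply: emeasurable_funM => //; apply/measurable_EFinP; exact: measurable_indic.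
  apply: (ae_mono2 ae_pw_lim_bound (ae_foralln vC)) => x limC vxC Dx.
  rewrite -EFinM lee_fin indicE; case: (boolP (x \in jump_tail k)) => [_|/negP nJ].
    by rewrite mulr1 (le_trans (ler_normB _ _))// lerD ?limC ?vxC.
  have nJ' : ~ jump_tail k x by move=> J; apply: nJ; exact: mem_set.
  by rewrite (pw_lim_off_jump_tail Dx nJ') subrr normr0 mulr0.
rewrite ge0_integralZl_EFin ?integral_indic//; try exact: mD.
  apply: lee_wpmul2l; first by rewrite lee_fin.
  by apply: le_measure; rewrite ?inE//; exact: measurableI mJ mD.
by apply/measurable_EFinP; exact: measurable_indic.
Qed.

Lemma pw_lim_L1_cvg : 0 <= C ->
  L1norm T (fun x => v k x - pw_lim x) @[k --> \oo] --> 0%E.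
Proof.
move=> C0.
apply: (@squeeze_cvge _ _ _ _ (cst 0%E) _ (fun k => (C + C)%:E * mu (jump_tail k))%E).
- apply: nearW => k; rewrite L1norm_pw_lim_le// andbT.
  by apply: integral_ge0 => x _; rewrite lee_fin normr_ge0.
- exact: cvg_cst.
- by rewrite -(mule0 (C + C)%:E); apply: cvgeZl => //; exact: jump_tail_cvg0.
Qed.

End eventually_constant.

Lemma int_sqr_ge1 {R : realDomainType} (z : int) : z != 0 -> 1 <= (z%:~R : R) ^+ 2.
Proof.
move=> z0; rewrite expr2 -intrM ler1z; move: z0 => /eqP z0; nia.
Qed.

Section admissible.
Context {R : realType} (T : R) (d : nat) (nu : 'I_d -> int).
Hypothesis T0 : 0 < T.
Local Notation mu := (@lebesgue_measure R).
Local Notation D := (Dom T).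

Definition nu_bound : R := \sum_(i < d) `|(nu i)%:~R : R|.

Lemma nu_bound_ge0 : 0 <= nu_bound.
Proof. by rewrite sumr_ge0. Qed.

Lemma nu_le_bound i : `|(nu i)%:~R : R| <= nu_bound.
Proof. by rewrite /nu_bound (bigD1 i)//= lerDl sumr_ge0. Qed.

Lemma Uad_measurable v : Uad T nu v -> measurable_fun D v.
Proof. by case=> /measurable_int/measurable_EFinP. Qed.

Lemma Uad_ae_bound v : Uad T nu v -> {ae mu, forall x, D x -> `|v x| <= nu_bound}.
Proof. by case=> _ vnu; apply: (ae_mono vnu) => x vx /vx [i ->]; exact: nu_le_bound. Qed.

Lemma Uad_inL2 v : Uad T nu v -> inL2 T v /\ L2norm T v <= nu_bound * Num.sqrt T.
Proof.
move=> Uv; apply: inL2_ae_bounded => //; first exact: nu_bound_ge0.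
  exact: Uad_measurable.
exact: Uad_ae_bound.
Qed.

Lemma Uad_sub_inL2 v w : Uad T nu v -> Uad T nu w ->
  inL2 T (fun x => v x - w x) /\
  L2norm T (fun x => v x - w x) <= (nu_bound + nu_bound) * Num.sqrt T.
Proof.
move=> Uv Uw; apply: inL2_ae_bounded => //.
- by rewrite addr_ge0 ?nu_bound_ge0.
- by apply: measurable_funB; exact: Uad_measurable.
apply: (ae_mono2 (Uad_ae_bound Uv) (Uad_ae_bound Uw)) => x vx wx Dx.
by rewrite (le_trans (ler_normB _ _))// lerD ?vx ?wx.
Qed.

(* Two admissible functions differ by at least 1 wherever they differ. *)
Lemma Uad_neq_measure_le v w : Uad T nu v -> Uad T nu w ->
  (mu (D `&` [set x | v x != w x]) <= (L2norm T (fun x => v x - w x) ^+ 2)%:E)%E.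
Proof.
move=> Uv Uw; have [L2vw _] := Uad_sub_inL2 Uv Uw.
have mv := Uad_measurable Uv; have mw := Uad_measurable Uw.
have mS := measurable_neq mv mw.
have -> : mu (D `&` [set x | v x != w x]) =
    (\int[mu]_(x in D) (\1_(D `&` [set x | v x != w x]) x)%:E)%E.
  rewrite integral_indic//; last exact: measurable_Dom.
  by congr mu; apply/seteqP; split => [x []|x []].
rewrite (L2norm_sqr L2vw).
apply: ae_ge0_le_integral.
- exact: measurable_Dom.
- by move=> x _; rewrite lee_fin indicE ler0n.
- by apply/measurable_EFinP; exact: measurable_indic.
- by move=> x _; rewrite lee_fin sqr_ge0.
- by apply: measurable_sqr_EFin; exact: measurable_funB.
apply: (ae_mono2 Uv.2 Uw.2) => x vnu wnu Dx; rewrite lee_fin indicE.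
case: (boolP (x \in _)) => [/set_mem [_ /= neq]|_]; last by rewrite sqr_ge0.
have [i ei] := vnu Dx; have [j ej] := wnu Dx.
move: neq; rewrite ei ej -intrB => neq; apply: int_sqr_ge1.
by apply: contra neq => /eqP e; rewrite -subr_eq0 -intrB e.
Qed.

End admissible.

Section proximal_gradient.
Context {R : realType} (T beta eta Lip m : R) (d : nat) (nu : 'I_d -> int).
Context (F : (R -> R) -> R) (gradF : (R -> R) -> (R -> R)).
Context (u : nat -> R -> R) (tau : nat -> R).
Local Notation mu := (@lebesgue_measure R).
Local Notation D := (Dom T).
Hypotheses (T0 : 0 < T) (beta0 : 0 < beta) (eta0 : 0 < eta).
Hypothesis F_ge : forall v, inL1 T v -> m <= F v.
Hypotheses (u0_Uad : Uad T nu (u 0%N)) (u0_BV : inBV T (u 0%N)).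
Hypothesis u_prox : forall k : nat,
  [/\ 0 < tau k, inL2 T (u k.+1),
      (forall v, inL2 T v ->
         (prox_obj T beta nu F gradF (u k) (tau k) (u k.+1)
          <= prox_obj T beta nu F gradF (u k) (tau k) v)%E) &
      ((eta * L2norm T (fun x => u k.+1 x - u k x) ^+ 2)%:E
         + ((F (u k.+1))%:E + beta%:E * TV T (u k.+1))
       <= (F (u k))%:E + beta%:E * TV T (u k))%E].

Hypothesis gradF_L2 : forall v, inL2 T v -> inL2 T (gradF v).
Hypothesis gradF_lipschitz : forall v w, inL2 T v -> inL2 T w ->
  L2norm T (fun x => gradF v x - gradF w x) <= Lip * L2norm T (fun x => v x - w x).

Let step k := L2norm T (fun x => u k.+1 x - u k x).

Lemma prox_obj_self k : Uad T nu (u k) ->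
  prox_obj T beta nu F gradF (u k) (tau k) (u k) =
  ((F (u k))%:E + beta%:E * TV T (u k))%E.
Proof.
move=> Uk; rewrite /prox_obj /Gfun; case: ifPn => [_|/asboolP//].
have -> : L2inner T (gradF (u k)) (fun x => u k x - u k x) = 0.
  by rewrite /L2inner; under eq_integral do rewrite subrr mulr0; rewrite integral0.
have -> : L2norm T (fun x => u k x - u k x) = 0.
  rewrite /L2norm; under eq_integral do rewrite subrr expr0n/=.
  by rewrite integral0/= sqrtr0.
by rewrite expr0n/= mulr0 !addr0.
Qed.

(* Comparing with the candidate [u k], the prox step has finite objective, which
   forces [u k.+1] into [Uad]; the descent inequality then keeps its TV finite. *)
Lemma iterate_Uad_TV k : Uad T nu (u k) /\ (TV T (u k) < +oo)%E.
Proof.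
elim: k => [|k [Uk TVk]]; first by split => //; case: u0_BV.
have [_ _ umin udesc] := u_prox k.
have fin : ((F (u k))%:E + beta%:E * TV T (u k) < +oo)%E.
  rewrite -(fineK (x:=TV T (u k))) ?ge0_fin_numE ?TV_ge0// -EFinM -EFinD; exact: ltry.
have Uk1 : Uad T nu (u k.+1).
  have := umin _ (Uad_inL2 T0 Uk).1; rewrite prox_obj_self// /prox_obj /Gfun.
  case: ifPn => [/asboolP//|_]; rewrite addey// leye_eq => /eqP E.
  by move: fin; rewrite E ltxx.
split => //; rewrite ltNge leye_eq; apply/negP => /eqP TV1.
move: udesc; rewrite TV1 gt0_muley ?lte_fin// (@addey _ (F (u k.+1))%:E)// addey//.
by rewrite leye_eq => /eqP E; move: fin; rewrite E ltxx.
Qed.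

Lemma iterate_Uad k : Uad T nu (u k).
Proof. by case: (iterate_Uad_TV k). Qed.

Definition energy k : R := F (u k) + beta * fine (TV T (u k)).

Lemma energy_EFin k : ((F (u k))%:E + beta%:E * TV T (u k))%E = (energy k)%:E.
Proof.
have [_ TVk] := iterate_Uad_TV k.
by rewrite -(fineK (x:=TV T (u k))) ?ge0_fin_numE ?TV_ge0// -EFinM -EFinD.
Qed.

Lemma objective_iterate k : ((F (u k))%:E + Gfun T beta nu (u k))%E = (energy k)%:E.
Proof.
by rewrite /Gfun; case: ifPn => [_|/asboolP]; [exact: energy_EFin|have := iterate_Uad k].
Qed.

Lemma energy_descent k : eta * step k ^+ 2 + energy k.+1 <= energy k.
Proof. by have [_ _ _] := u_prox k; rewrite !energy_EFin -EFinD lee_fin. Qed.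

Lemma energy_nonincreasing : nonincreasing_seq energy.
Proof.
apply/nonincreasing_seqP => k; apply: le_trans (energy_descent k).
by rewrite lerDr mulr_ge0 ?sqr_ge0// ltW.
Qed.

Lemma energy_ge k : m <= energy k.
Proof.
have [[L1 _] _] := iterate_Uad_TV k.
by rewrite /energy (le_trans (F_ge L1))// lerDl mulr_ge0 ?fine_ge0 ?TV_ge0// ltW.
Qed.

Lemma energy_cvg : energy @ \oo --> limn energy.
Proof.
apply: nonincreasing_is_cvgn; first exact: energy_nonincreasing.
by exists m => _ [k _ <-]; exact: energy_ge.
Qed.

Lemma step_sqr_le k : step k ^+ 2 <= (energy k - energy k.+1) / eta.
Proof. by rewrite ler_pdivlMr// mulrC lerBrDr energy_descent. Qed.

Lemma step_cvg0 : step @ \oo --> 0.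
Proof.
apply: (@squeeze_cvgr _ _ _ _ (cst 0) (fun k => Num.sqrt ((energy k - energy k.+1) / eta))).
- apply: nearW => k; rewrite sqrtr_ge0/=.
  by have := ler_wsqrtr (step_sqr_le k); rewrite sqrtr_sqr ger0_norm ?L2norm_ge0.
- exact: cvg_cst.
- rewrite -sqrtr0; apply: (cvg_comp _ (@Num.sqrt R)); last exact: sqrt_continuous.
  rewrite -(mul0r eta^-1); apply: cvgMl; rewrite -(subrr (limn energy)).
  by apply: cvgB; [|rewrite (cvg_shiftS energy)]; exact: energy_cvg.
Qed.

Lemma step_sqr_sum_le n : \sum_(k < n) step k ^+ 2 <= (energy 0%N - m) / eta.
Proof.
have tele n' : \sum_(k < n') step k ^+ 2 <= (energy 0%N - energy n') / eta.
  elim: n' => [|n' IH]; first by rewrite big_ord0 subrr mul0r.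
  rewrite big_ord_recr/= (le_trans (lerD IH (step_sqr_le n')))//.
  by rewrite -mulrDl addrA subrK.
by apply: le_trans (tele n) _; rewrite ler_pM2r ?invr_gt0// lerB// energy_ge.
Qed.

Lemma jump_set_summable : (\sum_(k <oo) mu (jump_set T u k) < +oo)%E.
Proof.
apply: (@le_lt_trans _ _ ((energy 0%N - m) / eta)%:E); last exact: ltry.
apply: lime_le; first by apply: is_cvg_nneseries => n _ _; exact: measure_ge0.
apply: nearW => n /=; rewrite big_mkord.
apply: le_trans (_ : (\sum_(k < n) (step k ^+ 2)%:E <= _)%E).
  by apply: lee_sum => k _; exact: Uad_neq_measure_le (iterate_Uad _) (iterate_Uad _).
by rewrite sumEFin lee_fin step_sqr_sum_le.
Qed.

Lemma TV_iterate_le k : (TV T (u k) <= ((energy 0%N - m) / beta)%:E)%E.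
Proof.
have [[L1 _] TVk] := iterate_Uad_TV k.
rewrite -(fineK (x:=TV T (u k))) ?ge0_fin_numE ?TV_ge0// lee_fin ler_pdivlMr// mulrC.
have := energy_nonincreasing (leq0n k); rewrite /energy; have := F_ge L1; lra.
Qed.

Lemma L1norm_iterate_le k : (L1norm T (u k) <= (nu_bound nu * T)%:E)%E.
Proof.
rewrite EFinM -(lebesgue_Dom T0) /L1norm.
under eq_integral do rewrite -abse_EFin.
apply: (integral_le_bound (nu_bound nu)%:E).
- exact: measurable_Dom.
- by apply/measurable_EFinP; exact: Uad_measurable (iterate_Uad k).
- by rewrite lee_fin nu_bound_ge0.
- by apply: (ae_mono (Uad_ae_bound (iterate_Uad k))) => x ux Dx /=; rewrite lee_fin ux.
Qed.

Lemma limit_L1_cvg : L1norm T (fun x => u k x - pw_lim u x) @[k --> \oo] --> 0%E.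
Proof.
apply: pw_lim_L1_cvg T0 _ _ jump_set_summable (nu_bound_ge0 nu) => k.
- exact: Uad_measurable (iterate_Uad k).
- exact: Uad_ae_bound (iterate_Uad k).
Qed.

Lemma limit_Uad : Uad T nu (pw_lim u).
Proof.
have mu_k k := Uad_measurable (iterate_Uad k).
have uC k := Uad_ae_bound (iterate_Uad k).
split.
  apply: integrable_ae_bounded T0 (nu_bound_ge0 nu) _ _.
    exact: measurable_pw_lim.
  exact: ae_pw_lim_bound mu_k uC jump_set_summable.
have unu : {ae mu, forall x, forall k, D x -> exists i, u k x = (nu i)%:~R}.
  by apply: ae_foralln => k; case: (iterate_Uad k).
apply: (ae_mono2 (ae_pw_lim_eq mu_k jump_set_summable) unu) => x lim_eq uk Dx.
by have [k ->] := lim_eq Dx; exact: uk.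
Qed.

Lemma limit_TV_le : (TV T (pw_lim u) <= ((energy 0%N - m) / beta)%:E)%E.
Proof.
have iL1 k : inL1 T (u k) by case: (iterate_Uad k).
have := TV_le_of_L1_cvg T0 iL1 limit_Uad.1 limit_L1_cvg.
by apply => k; exact: TV_iterate_le.
Qed.

(* The iterates stay in the bounded set [Uad], so by the Lipschitz bound the
   gradients stay within [|Lip|] times its diameter of [gradF (u 0)]. *)
Lemma iterates_bounded : exists M : R, forall k,
  L2norm T (u k) <= M /\ L2norm T (gradF (u k)) <= M.
Proof.
have L2u k := (Uad_inL2 T0 (iterate_Uad k)).1.
set K := `|Lip| * ((nu_bound nu + nu_bound nu) * Num.sqrt T).
set G0 := L2norm T (gradF (u 0%N)).
exists (Num.max (nu_bound nu * Num.sqrt T) (Num.sqrt (2 * K ^+ 2 + 2 * G0 ^+ 2))).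
move=> k; split; first by rewrite le_max (Uad_inL2 T0 (iterate_Uad k)).2.
rewrite le_max; apply/orP; right.
have g0L := gradF_L2 (L2u 0%N); have gkL := gradF_L2 (L2u k).
have [dL _] := inL2_add_sqr gkL (inL2_opp g0L).1.
have dK : L2norm T (fun x => gradF (u k) x - gradF (u 0%N) x) <= K.
  apply: le_trans (gradF_lipschitz (L2u k) (L2u 0%N)) _.
  apply: le_trans (ler_wpM2r (L2norm_ge0 _ _) (ler_norm Lip)) _.
  by apply: ler_wpM2l => //; exact: (Uad_sub_inL2 T0 (iterate_Uad k) u0_Uad).2.
have [_ le2] := inL2_add_sqr dL g0L.
have -> : gradF (u k) = (fun x => (gradF (u k) x - gradF (u 0%N) x) + gradF (u 0%N) x).
  by apply/funext => x; rewrite subrK.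
rewrite -(ger0_norm (L2norm_ge0 _ _)) -sqrtr_sqr ler_wsqrtr// (le_trans le2)//.
rewrite lerD2r ler_pM2l// ler_sqr ?nnegrE ?L2norm_ge0//.
exact: le_trans (L2norm_ge0 _ _) dK.
Qed.

Lemma objective_nonincreasing k :
  ((F (u k.+1))%:E + Gfun T beta nu (u k.+1) <= (F (u k))%:E + Gfun T beta nu (u k))%E.
Proof. by rewrite !objective_iterate lee_fin; exact: energy_nonincreasing. Qed.

Lemma objective_cvg : exists l : R,
  ((F (u k))%:E + Gfun T beta nu (u k))%E @[k --> \oo] --> l%:E.
Proof.
exists (limn energy); under eq_fun do rewrite objective_iterate.
by apply: cvg_EFin; [exact: nearW|exact: energy_cvg].
Qed.

Lemma iterates_BV_bounded : exists M : R, forall k, (L1norm T (u k) + TV T (u k) <= M%:E)%E.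
Proof.
exists (nu_bound nu * T + (energy 0%N - m) / beta) => k.
by rewrite EFinD leeD ?L1norm_iterate_le ?TV_iterate_le.
Qed.

Lemma limit_inBV : inBV T (pw_lim u).
Proof. by split; [case: limit_Uad|exact: le_lt_trans limit_TV_le (ltry _)]. Qed.

End proximal_gradient.

Theorem theorem4p1 (R : realType) (T beta eta Lip : R) (d : nat)
    (nu : 'I_d -> int) (F : (R -> R) -> R) (gradF : (R -> R) -> (R -> R))
    (u : nat -> R -> R) :
  0 < T -> 0 < beta -> 0 < eta ->
  (forall i j : 'I_d, (i < j)%N -> nu i < nu j) ->
  F_assumptions T F gradF ->
  (forall v w, inL2 T v -> inL2 T w ->
     L2norm T (fun x => gradF v x - gradF w x)
       <= Lip * L2norm T (fun x => v x - w x)) ->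
  Uad T nu (u 0%N) -> inBV T (u 0%N) ->
  prox_grad_seq T beta nu F gradF eta u ->
  [/\ (exists M : R, forall k, L2norm T (u k) <= M /\ L2norm T (gradF (u k)) <= M),
      ((forall k, ((F (u k.+1))%:E + Gfun T beta nu (u k.+1)
                    <= (F (u k))%:E + Gfun T beta nu (u k))%E) /\
       exists l : R, ((F (u k))%:E + Gfun T beta nu (u k))%E @[k --> \oo] --> l%:E),
      (fun k => L2norm T (fun x => u k.+1 x - u k x)) @ \oo --> 0 &
      exists ubar : R -> R,
        [/\ Uad T nu ubar, inBV T ubar,
            (exists M : R, forall k, (L1norm T (u k) + TV T (u k) <= M%:E)%E) &
            (fun k => L1norm T (fun x => u k x - ubar x)) @ \oo --> 0%E]].
Proof.
move=> T0 beta0 eta0 _ [_ [m F_ge] gradF_L2 _] gradF_lip u0_Uad u0_BV [tau u_prox].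
split.
- exact: iterates_bounded T0 beta0 u0_Uad u0_BV u_prox gradF_L2 gradF_lip.
- split; first exact: objective_nonincreasing T0 beta0 eta0 u0_Uad u0_BV u_prox.
  exact: objective_cvg T0 beta0 eta0 F_ge u0_Uad u0_BV u_prox.
- exact: step_cvg0 T0 beta0 eta0 F_ge u0_Uad u0_BV u_prox.
exists (pw_lim u); split.
- exact: limit_Uad T0 beta0 eta0 F_ge u0_Uad u0_BV u_prox.
- exact: limit_inBV T0 beta0 eta0 F_ge u0_Uad u0_BV u_prox.
- exact: iterates_BV_bounded T0 beta0 eta0 F_ge u0_Uad u0_BV u_prox.
- exact: limit_L1_cvg T0 beta0 eta0 F_ge u0_Uad u0_BV u_prox.
Qed.
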